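(* Let $X=\mathbb{Z}$, $\beta\in Sym(X)$ the translation $x\mapsto x+1$, and $n,m\geq1$. Let $c=c(a_1,\dots,a_n,b)$ be a nontrivial cyclically reduced word in the free group $\mathbb{F}_{n+1}=\langle a_1,\dots,a_n,b\rangle$ with exponent sum of $b$ equal to zero, and $d=d(a'_1,\dots,a'_m,b')$ a nontrivial cyclically reduced word in $\mathbb{F}_{m+1}=\langle a'_1,\dots,a'_m,b'\rangle$ with exponent sum of $b'$ equal to zero. Let $\alpha=(\alpha_1,\dots,\alpha_n)\in Sym(X)^n$ be such that, for the action of $\mathbb{F}_{n+1}$ on $X$ given by $a_i\mapsto\alpha_i$, $b\mapsto\beta$, and with $c$ acting as $c(\alpha_1,\dots,\alpha_n,\beta)$: the action is faithful and transitive; for every $w\in\mathbb{F}_{n+1}\setminus\langle c\rangle$ there are infinitely many $x$ with $cx=x$, $cwx=wx$, $wx\neq x$; there is a Følner sequence $(A_k)_{k\geq1}$ for this action consisting of pairwise disjoint sets with $|A_k|=k$, each pointwise fixed by $c$; for every $k\geq1$ there are infinitely many $\langle c\rangle$-orbits of size $k$; every $\langle c\rangle$-orbit is finite; and every finite index subgroup of $\mathbb{F}_{n+1}$ acts transitively. Let $\alpha'=(\alpha'_1,\dots,\alpha'_m)\in Sym(X)^m$ satisfy the same properties for $\mathbb{F}_{m+1}$ (via $a'_j\mapsto\alpha'_j$, $b'\mapsto\beta$) and $d$, with Følner sequence $(B_k)_{k\geq1}$. Let $Z=\{\sigma\in Sym(X):\sigma\, c(\alpha,\beta)=d(\alpha',\beta)\,\sigma\}$,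 a closed subset of $Sym(X)$ (topology of pointwise convergence). For $\sigma\in Z$, let $\Gamma=\mathbb{F}_{n+1}\ast_{c=d}\mathbb{F}_{m+1}$ act on $X$ by $g\cdot x=g(\alpha,\beta)x$ for $g\in\mathbb{F}_{n+1}$ and $h\cdot x=\sigma^{-1}h(\alpha',\beta)\sigma x$ for $h\in\mathbb{F}_{m+1}$. Then the set $\mathcal{O}_1=\{\sigma\in Z:\text{this action of }\Gamma\text{ on }X\text{ is faithful}\}$ is generic in $Z$.
   Context: A subset of a Baire space is meagre if it is a countable union of closed sets with empty interior, and generic (dense $G_\delta$) if its complement is meagre. $Z$ is closed in the Polish space $Sym(X)$, hence a Baire space. A sequence $(A_k)$ of finite non-empty subsets is Følner for an action of $\Gamma$ if $|A_k\triangle gA_k|/|A_k|\to0$ for all $g\in\Gamma$. $\mathbb{F}_{n+1}\ast_{c=d}\mathbb{F}_{m+1}$ denotes the amalgamated free product identifying $\langle c\rangle$ with $\langle d\rangle$ via $c\mapsto d$. *)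

From mathcomp Require Import all_boot all_order all_algebra.
From Stdlib Require Import Relations.
Set Implicit Arguments. Unset Strict Implicit. Unset Printing Implicit Defensive.
Import Order.TTheory GRing.Theory Num.Theory.
Local Open Scope ring_scope.

Record perm := Perm {
  pfun : int -> int; pinv : int -> int;
  pK : cancel pfun pinv; pKV : cancel pinv pfun }.

Lemma beta_K : cancel (fun x : int => x + 1) (fun x => x - 1).
Proof. by move=> x; rewrite addrK. Qed.
Lemma beta_KV : cancel (fun x : int => x - 1) (fun x => x + 1).
Proof. by move=> x; rewrite subrK. Qed.
Definition beta : perm := Perm beta_K beta_KV.

Lemma pcomp_K (p q : perm) : cancel (pfun p \o pfun q) (pinv q \o pinv p).
Proof. by move=> x /=; rewrite pK pK. Qed.
Lemma pcomp_KV (p q : perm) : cancel (pinv q \o pinv p) (pfun p \o pfun q).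
Proof. by move=> x /=; rewrite pKV pKV. Qed.
Definition pcomp (p q : perm) : perm := Perm (pcomp_K p q) (pcomp_KV p q).
Definition pinvp (p : perm) : perm := Perm (pKV p) (pK p).

(* A letter is (generator, inverted?) ; a word is a list of letters,
   read as a product l_1 l_2 ... l_k. *)
Definition linv {A : Type} (l : A * bool) : A * bool := (l.1, ~~ l.2).
Definition winv {A : Type} (w : seq (A * bool)) := rev (map linv w).

Fixpoint reduced {A : eqType} (w : seq (A * bool)) : bool :=
  match w with
  | l1 :: ((l2 :: _) as w') => (l2 != linv l1) && reduced w'
  | _ => true
  end.

Definition cyc_reduced {A : eqType} (w : seq (A * bool)) : bool :=
  reduced w && (if w is l :: _ then last l w != linv l else true).

Fixpoint reduce {A : eqType} (w : seq (A * bool)) : seq (A * bool) :=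
  match w with
  | [::] => [::]
  | l :: w' => match reduce w' with
               | l' :: r => if l' == linv l then r else l :: l' :: r
               | [::] => [:: l]
               end
  end.

Definition zpow {A : Type} (w : seq (A * bool)) (k : int) : seq (A * bool) :=
  match k with
  | Posz n => flatten (nseq n w)
  | Negz n => flatten (nseq n.+1 (winv w))
  end.

Definition expsum {A : eqType} (a : A) (w : seq (A * bool)) : int :=
  (count (pred1 (a, false)) w)%:Z - (count (pred1 (a, true)) w)%:Z.

(* the action of a word given an assignment of permutations to generators:
   w = l_1 ... l_k acts as l_1 o ... o l_k *)
Definition weval {A : Type} (f : A -> perm) (w : seq (A * bool)) (x : int) : int :=
  foldr (fun l y => if l.2 then pinv (f l.1) y else pfun (f l.1) y) x w.

(* assignment a_i |-> alpha_i, b |-> beta ; b is the letter None *)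
Definition act_of {n : nat} (alpha : 'I_n -> perm) (o : option 'I_n) : perm :=
  match o with Some i => alpha i | None => beta end.

(* subgroups of a free group, as sets of words closed under free equality *)
Definition is_subgroup {A : eqType} (H : seq (A * bool) -> Prop) : Prop :=
  [/\ H [::],
      (forall u v, H u -> H v -> H (u ++ v)),
      (forall u, H u -> H (winv u)) &
      (forall u v, reduce u = reduce v -> H u -> H v)].

(* finitely many left cosets r H cover the group *)
Definition finite_index {A : eqType} (H : seq (A * bool) -> Prop) : Prop :=
  exists R : seq (seq (A * bool)), forall w, exists r, r \in R /\ H (winv r ++ w).

Definition symdiff_size (s t : seq int) : nat :=
  (count (fun x => x \notin t) s + count (fun y => y \notin s) t)%N.

Section GoodAction.
Variables (A : eqType) (f : A -> perm) (c : seq (A * bool)).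

Definition c_orbit (x y : int) : Prop := exists j : int, weval f (zpow c j) x = y.

Definition orbit_size (k : nat) (x : int) : Prop :=
  exists s : seq int, [/\ uniq s, size s = k & forall y, y \in s <-> c_orbit x y].

Definition good_action : Prop :=
      (forall w, (forall x, weval f w x = x) -> reduce w = [::]) /\
      (forall x y, exists w, weval f w x = y) /\
      (forall w, (forall k : int, reduce w <> reduce (zpow c k)) ->
         forall L : seq int, exists x, x \notin L /\
           [/\ weval f c x = x, weval f c (weval f w x) = weval f w x
             & weval f w x <> x]) /\
      (exists As : nat -> seq int,
         [/\ (forall k, (0 < k)%N -> uniq (As k) /\ size (As k) = k),
             (forall k l, (0 < k)%N -> (0 < l)%N -> k <> l ->
                forall x, x \in As k -> x \notin As l),
             (forall k, (0 < k)%N -> forall x, x \in As k -> weval f c x = x) &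
             (forall g, forall eps : rat, 0 < eps -> exists K : nat,
                forall k, (K <= k)%N -> (0 < k)%N ->
                  ((symdiff_size (As k) (map (weval f g) (As k)))%:R / k%:R : rat)
                    < eps)]) /\
      (forall k, (0 < k)%N -> forall L : seq int,
         exists x, orbit_size k x /\ forall y, y \in L -> ~ c_orbit x y) /\
      (forall x, exists s : seq int, forall y, c_orbit x y -> y \in s) /\
      (forall H, is_subgroup H -> finite_index H ->
         forall x y, exists h, H h /\ weval f h x = y).
End GoodAction.

Inductive pres_step {A : Type} (r : seq (A * bool)) :
  seq (A * bool) -> seq (A * bool) -> Prop :=
| pstep_free u v l : pres_step r (u ++ [:: l; linv l] ++ v) (u ++ v)
| pstep_rel u v : pres_step r (u ++ r ++ v) (u ++ v).

Definition pres_eq {A : Type} (r : seq (A * bool)) :=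
  clos_refl_sym_trans _ (pres_step r).

(* generators: inl (a_i / b), inr (a'_j / b'); single relator c d^{-1} *)
Definition amal_rel {n m : nat} (c : seq (option 'I_n * bool))
  (d : seq (option 'I_m * bool)) : seq ((option 'I_n + option 'I_m) * bool) :=
  map (fun l => (inl l.1, l.2)) c ++ winv (map (fun l => (inr l.1, l.2)) d).

Definition gamma_f {n m : nat} (alpha : 'I_n -> perm) (alpha' : 'I_m -> perm)
  (sigma : perm) (g : option 'I_n + option 'I_m) : perm :=
  match g with
  | inl o => act_of alpha o
  | inr o => pcomp (pinvp sigma) (pcomp (act_of alpha' o) sigma)
  end.

Definition Zset {n m : nat} (alpha : 'I_n -> perm) (alpha' : 'I_m -> perm)
  (c : seq (option 'I_n * bool)) (d : seq (option 'I_m * bool)) (sigma : perm) :=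
  forall x, pfun sigma (weval (act_of alpha) c x) = weval (act_of alpha') d (pfun sigma x).

Definition O1 {n m : nat} (alpha : 'I_n -> perm) (alpha' : 'I_m -> perm)
  (c : seq (option 'I_n * bool)) (d : seq (option 'I_m * bool)) (sigma : perm) :=
  Zset alpha alpha' c d sigma /\
  forall W, (forall x, weval (gamma_f alpha alpha' sigma) W x = x) ->
    pres_eq (amal_rel c d) W [::].

Definition agree (s t : perm) (L : seq int) := forall x, x \in L -> pfun s x = pfun t x.

Definition rel_closed (Z F : perm -> Prop) :=
  (forall s, F s -> Z s) /\
  forall s, Z s -> ~ F s -> exists L, forall t, Z t -> agree s t L -> ~ F t.

Definition rel_empty_interior (Z F : perm -> Prop) :=
  forall s, F s -> forall L, exists t, [/\ Z t, agree s t L & ~ F t].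

Definition generic_in (Z S : perm -> Prop) :=
  (forall s, S s -> Z s) /\
  exists F : nat -> perm -> Prop,
    (forall k, rel_closed Z (F k) /\ rel_empty_interior Z (F k)) /\
    forall s, (Z s /\ ~ S s) <-> exists k, F k s.

From Pilot Require Import Defs.
From mathcomp Require Import all_boot all_order all_algebra.
From Stdlib Require Import Relations Classical.
Set Implicit Arguments. Unset Strict Implicit. Unset Printing Implicit Defensive.
Local Open Scope ring_scope.

(* For a word W that is nontrivial in the amalgamated product, the set of sigma in Z
   for which W acts trivially is relatively closed (if W moves x, this is seen by
   sigma on the finite trajectory of x) and has empty interior; O1 is the complement
   in Z of the countable union of these sets.  For the empty interior, write W as a
   reduced product of syllables alternating between the two factors and lying outside
   <c> = <d>.  Composing sigma with a product tau of disjoint transpositions of c-fixed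
   points keeps it in Z and does not change it on a given finite set; it conjugates
   every F_{m+1}-syllable by tau, so one tau sits between consecutive syllables.
   Choosing the transpositions one syllable at a time, among the infinitely many
   x with cx = x and cwx = wx <> x, steers a point x to some y <> x (ping-pong).
   A single syllable acts nontrivially by faithfulness. *)

Section WordAction.
Variables (A : Type) (f : A -> perm).

Lemma linvK : involutive (@linv A).
Proof. by case=> a []. Qed.

Lemma winvK : involutive (@winv A).
Proof. by move=> w; rewrite /winv map_rev revK -map_comp (eq_map linvK) map_id. Qed.

Lemma winv_cons l (w : seq (A * bool)) : winv (l :: w) = winv w ++ [:: linv l].
Proof. by rewrite /winv /= rev_cons cats1. Qed.

Lemma weval_cons l w x :
  weval f (l :: w) x = (if l.2 then pinv (f l.1) else pfun (f l.1)) (weval f w x).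
Proof. by case: l => a []. Qed.

Lemma weval_cat u v x : weval f (u ++ v) x = weval f u (weval f v x).
Proof. by rewrite /weval foldr_cat. Qed.

Lemma weval_winvK w : cancel (weval f w) (weval f (winv w)).
Proof.
elim: w => [//|[a b] w IH] x.
by rewrite winv_cons weval_cat; case: b; rewrite /= ?pK ?pKV IH.
Qed.

Lemma weval_winvKV w : cancel (weval f (winv w)) (weval f w).
Proof. by move=> x; rewrite -{1}(winvK w) weval_winvK. Qed.

Lemma weval_inj w : injective (weval f w).
Proof. exact: can_inj (weval_winvK w). Qed.

Fixpoint trajectory (w : seq (A * bool)) (x : int) : seq int :=
  if w is _ :: w' then weval f w x :: trajectory w' x else [:: x].

Lemma trajectory_head w x : weval f w x \in trajectory w x.
Proof. by case: w => [|l w]; rewrite /= mem_head. Qed.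

End WordAction.

Section Presentation.
Variables (A : Type) (r : seq (A * bool)).
Local Notation "u ~ v" := (pres_eq r u v) (at level 70).

Lemma pres_refl u : u ~ u.
Proof. exact: rst_refl. Qed.
Lemma pres_sym u v : u ~ v -> v ~ u.
Proof. exact: rst_sym. Qed.
Lemma pres_trans v u w : u ~ v -> v ~ w -> u ~ w.
Proof. exact: rst_trans. Qed.

Lemma pres_step_cat u v x y : pres_step r x y -> pres_step r (u ++ x ++ v) (u ++ y ++ v).
Proof.
by case=> [a b l|a b]; rewrite -!catA !(catA u a); [apply: pstep_free|apply: pstep_rel].
Qed.

Lemma pres_cat_cong u v x y : x ~ y -> u ++ x ++ v ~ u ++ y ++ v.
Proof.
elim=> {x y} [x y Hxy|x|x y _|x y z _ IH1 _ IH2].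
- exact/rst_step/pres_step_cat.
- exact: pres_refl.
- exact: pres_sym.
- exact: pres_trans IH2.
Qed.

Lemma pres_congl u x y : x ~ y -> u ++ x ~ u ++ y.
Proof. by move/(pres_cat_cong u [::]); rewrite !cats0. Qed.

Lemma pres_congr v x y : x ~ y -> x ++ v ~ y ++ v.
Proof. by move=> H; have := pres_cat_cong [::] v H. Qed.

Lemma pres_cat x y x' y' : x ~ x' -> y ~ y' -> x ++ y ~ x' ++ y'.
Proof. by move=> /(pres_congr y) H1 /(pres_congl x') H2; apply: pres_trans H2. Qed.

Lemma pres_winv_cancel x : winv x ++ x ~ [::].
Proof.
elim: x => [|l x IH]; first exact: pres_refl.
rewrite winv_cons -catA; apply: pres_trans (pres_congl _ _) IH.
by apply: rst_step; rewrite -{2}(linvK l); apply: (pstep_free _ [::]).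
Qed.

Lemma pres_cancel_winv x : x ++ winv x ~ [::].
Proof. by have := pres_winv_cancel (winv x); rewrite winvK. Qed.

Lemma pres_winv x y : x ~ y -> winv x ~ winv y.
Proof.
move=> Hxy; rewrite -[winv x]cats0.
apply: pres_trans (pres_congl _ (pres_sym (pres_cancel_winv y))) _.
apply: pres_trans (pres_congl _ (pres_congr _ (pres_sym Hxy))) _.
by rewrite catA; have := pres_congr (winv y) (pres_winv_cancel x).
Qed.

Lemma pres_zpow k x y : x ~ y -> zpow x k ~ zpow y k.
Proof.
have pres_nseq j u v : u ~ v -> flatten (nseq j u) ~ flatten (nseq j v).
  by move=> Huv; elim: j => [|j IH]; [apply: pres_refl|apply: pres_cat].
by case: k => k Hxy; apply: pres_nseq => //; apply: pres_winv.
Qed.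

End Presentation.

Section WordMap.
Variables (A B : Type) (g : A -> B).

Definition wmap (w : seq (A * bool)) : seq (B * bool) := map (fun l => (g l.1, l.2)) w.

Lemma wmap_cat u v : wmap (u ++ v) = wmap u ++ wmap v.
Proof. exact: map_cat. Qed.

Lemma wmap_winv w : wmap (winv w) = winv (wmap w).
Proof. by rewrite /wmap /winv map_rev -!map_comp. Qed.

Lemma wmap_zpow w k : wmap (zpow w k) = zpow (wmap w) k.
Proof.
have wmap_nseq j u : wmap (flatten (nseq j u)) = flatten (nseq j (wmap u)).
  by elim: j => [|j IH] //=; rewrite wmap_cat IH.
by case: k => k; [exact: wmap_nseq|rewrite /= -wmap_winv -wmap_nseq -wmap_cat].
Qed.

End WordMap.

Lemma pres_wmap_reduce (A : eqType) (B : Type) (r : seq (B * bool)) (g : A -> B) w :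
  pres_eq r (wmap g w) (wmap g (reduce w)).
Proof.
elim: w => [|l w IH] /=; first exact: pres_refl.
apply: pres_trans (pres_congl [:: (g l.1, l.2)] IH) _.
case: (reduce w) => [|l' w'] /=; first exact: pres_refl.
case: eqP => [->|_]; last exact: pres_refl.
by apply: rst_step; apply: (pstep_free _ [::]).
Qed.

Fixpoint pairs_support (P : seq (int * int)) : seq int :=
  if P is p :: P' then p.1 :: p.2 :: pairs_support P' else [::].

Fixpoint swap_pairs (P : seq (int * int)) (z : int) : int :=
  if P is p :: P' then
    if z == p.1 then p.2 else if z == p.2 then p.1 else swap_pairs P' z
  else z.

Lemma swap_pairs_out P z : z \notin pairs_support P -> swap_pairs P z = z.
Proof.
elim: P => [|[a b] P IH] //=; rewrite !inE !negb_or => /and3P[za zb zP].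
by rewrite (negPf za) (negPf zb) IH.
Qed.

Lemma swap_pairs_in P z : z \in pairs_support P -> swap_pairs P z \in pairs_support P.
Proof.
elim: P => [|[a b] P IH] //=; rewrite !inE.
by case: eqP => [_|_]; [rewrite eqxx orbT|case: eqP => [_|_ /IH ->]; rewrite ?eqxx ?orbT].
Qed.

Lemma swap_pairs_avoid P a z :
  a \notin pairs_support P -> z != a -> swap_pairs P z != a.
Proof.
move=> aP za; have [zP|zP] := boolP (z \in pairs_support P); last by rewrite swap_pairs_out.
by apply: contraNneq aP => <-; apply: swap_pairs_in.
Qed.

Lemma swap_pairsK P : uniq (pairs_support P) -> involutive (swap_pairs P).
Proof.
elim: P => [|[a b] P IH] //= /and3P[]; rewrite !inE negb_or => /andP[ab aP] bP uP z.
have [->|za] := eqVneq z a; first by rewrite eq_sym (negPf ab) eqxx.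
have [->|zb] := eqVneq z b; first by rewrite eqxx.
by rewrite (negPf (swap_pairs_avoid aP za)) (negPf (swap_pairs_avoid bP zb)) IH.
Qed.

Lemma mem_pairs_support P a b : (a, b) \in P -> a \in pairs_support P.
Proof.
elim: P => [|[a' b'] P IH] //=; rewrite !inE.
by case/orP => [/eqP[->]|/IH ->]; rewrite ?eqxx ?orbT.
Qed.

Lemma swap_pairs_mem P a b :
  uniq (pairs_support P) -> (a, b) \in P -> swap_pairs P a = b.
Proof.
elim: P => [|[a' b'] P IH] //= /and3P[]; rewrite !inE negb_or => /andP[_ a'P] b'P uP.
case/orP => [/eqP[-> ->]|abP]; first by rewrite eqxx.
have aP := mem_pairs_support abP.
by rewrite (negPf (memPn a'P _ aP)) (negPf (memPn b'P _ aP)) IH.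
Qed.

Definition swap_perm P (uP : uniq (pairs_support P)) : perm :=
  Perm (swap_pairsK uP) (swap_pairsK uP).

Section PingPong.
Variables (T : eqType) (act : T -> int -> int) (good : int -> Prop).

Fixpoint chain (pi : int -> int) (ss : seq T) (x : int) : int :=
  match ss with
  | [::] => x
  | [:: s] => act s x
  | s :: ss' => act s (pi (chain pi ss' x))
  end.

Definition pingpong_move (s : T) : Prop :=
  forall U : seq int, exists p,
    [/\ p \notin U, act s p \notin U, good p, good (act s p) & act s p != p].

Lemma pingpong ss : ss != [::] -> {in ss, forall s, pingpong_move s} ->
  forall U : seq int, exists x y P, [/\ uniq (x :: pairs_support P),
    y \notin x :: pairs_support P, good y /\ y \notin U,
    {in pairs_support P, forall z, good z /\ z \notin U} &
    forall pi, (forall a b, (a, b) \in P -> pi a = b) -> chain pi ss x = y].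
Proof.
elim: ss => [//|s ss IH] _ moves U.
have move_s := moves s (mem_head _ _).
case: ss IH moves => [|s' ss] IH moves.
  have [p [_ pU _ gp ps]] := move_s U.
  by exists p, (act s p), [::]; split; rewrite ?inE.
have moves' : {in s' :: ss, forall t, pingpong_move t}.
  by move=> t tss; apply: moves; rewrite inE tss orbT.
have [x [y [P [uxP yxP [gy yU] gP chainP]]]] := IH isT moves' U.
have [p [pU' spU' gp gsp sp]] := move_s (U ++ x :: y :: pairs_support P).
move: pU' spU'; rewrite !mem_cat !inE !negb_or => /and4P[pU px py pP] /and4P[spU spx spy spP].
exists x, (act s p), ((y, p) :: P); split.
- move: uxP yxP; rewrite /= !inE !negb_or => /andP[xP uP] /andP[yx yP].
  by rewrite xP yP pP uP eq_sym yx eq_sym px eq_sym py.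
- by rewrite /= !inE !negb_or spx spy sp spP.
- by [].
- by move=> z; rewrite /= !inE => /or3P[/eqP->|/eqP->|/gP].
- move=> pi piP; rewrite /= -/(chain pi (s' :: ss) x).
  by rewrite chainP ?(piP y p) ?mem_head // => a b abP; apply: piP; rewrite inE abP orbT.
Qed.

End PingPong.

Lemma notin_map_cancel (g ginv : int -> int) (U : seq int) x :
  cancel g ginv -> x \notin map ginv U -> g x \notin U.
Proof. by move=> gK; apply: contra => gxU; rewrite -(gK x); apply: map_f. Qed.

Section GoodAction.
Variables (A : eqType) (f : A -> perm) (c : seq (A * bool)).
Hypothesis ga : good_action f c.

Lemma good_action_faithful w : (forall x, weval f w x = x) -> reduce w = [::].
Proof. by case: ga => faithful _; apply: faithful. Qed.

Lemma good_action_fixed_points w : (forall k, reduce w <> reduce (zpow c k)) ->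
  forall L : seq int, exists x, x \notin L /\
    [/\ weval f c x = x, weval f c (weval f w x) = weval f w x & weval f w x <> x].
Proof. by case: ga => _ [_ [fixed _]]; apply: fixed. Qed.

End GoodAction.

Section Amalgam.
Variables (n m : nat) (c : seq (option 'I_n * bool)) (d : seq (option 'I_m * bool)).
Local Notation word := (seq ((option 'I_n + option 'I_m) * bool)).
Local Notation "u ~ v" := (pres_eq (amal_rel c d) u v) (at level 70).
Local Notation mapL := (wmap (@inl (option 'I_n) (option 'I_m))).
Local Notation mapR := (wmap (@inr (option 'I_n) (option 'I_m))).

Lemma pres_amal_zpow k : mapL (zpow c k) ~ mapR (zpow d k).
Proof.
rewrite !wmap_zpow; apply: pres_zpow.
rewrite -[mapL c]cats0.
apply: pres_trans (pres_congl _ (pres_sym (pres_winv_cancel _ (mapR d)))) _.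
by rewrite catA; apply: rst_step; apply: (pstep_rel _ [::]).
Qed.

Definition syllable := (seq (option 'I_n * bool) + seq (option 'I_m * bool))%type.

Definition syllable_word (s : syllable) : word :=
  match s with inl w => mapL w | inr w => mapR w end.

Definition syllables_word (S : seq syllable) : word := flatten (map syllable_word S).

Definition left_syllable (s : syllable) : bool := if s is inl _ then true else false.

Definition in_c_subgroup w := exists k, reduce w = reduce (zpow c k).
Definition in_d_subgroup w := exists k, reduce w = reduce (zpow d k).

Definition proper_syllable (s : syllable) : Prop :=
  match s with inl w => ~ in_c_subgroup w | inr w => ~ in_d_subgroup w end.

Definition alternating (S : seq syllable) : bool :=
  sorted (fun s t => left_syllable s != left_syllable t) S.

Definition reduced_syllables (S : seq syllable) : Prop :=
  (size S <= 1)%N \/ alternating S /\ {in S, forall s, proper_syllable s}.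

Definition letter_syllable (l : (option 'I_n + option 'I_m) * bool) : syllable :=
  match l with (inl a, b) => inl [:: (a, b)] | (inr a, b) => inr [:: (a, b)] end.

Lemma syllables_word_letters W : syllables_word (map letter_syllable W) = W.
Proof. by elim: W => [|[[a|a] b] W IH] //=; rewrite -[in RHS]IH. Qed.

Lemma syllable_merge s t : left_syllable s = left_syllable t ->
  exists u, syllable_word u = syllable_word s ++ syllable_word t.
Proof.
by case: s t => w [] w' // _; [exists (inl (w ++ w'))|exists (inr (w ++ w'))]; rewrite /= wmap_cat.
Qed.

Lemma syllable_transfer s : ~ proper_syllable s ->
  exists2 s', left_syllable s' != left_syllable s & syllable_word s ~ syllable_word s'.
Proof.
have pres_reduce := pres_wmap_reduce (amal_rel c d).
case: s => w /= /NNPP[k Ek].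
  exists (inr (zpow d k)) => //=; apply: pres_trans (pres_reduce _ _ _) _.
  by rewrite Ek; apply: pres_trans (pres_sym (pres_reduce _ _ _)) (pres_amal_zpow k).
exists (inl (zpow c k)) => //=; apply: pres_trans (pres_reduce _ _ _) _.
by rewrite Ek; apply: pres_trans (pres_sym (pres_reduce _ _ _)) (pres_sym (pres_amal_zpow k)).
Qed.

Lemma syllables_word_cons s S : syllables_word (s :: S) = syllable_word s ++ syllables_word S.
Proof. by []. Qed.

Lemma reduced_syllables_tail t T : reduced_syllables (t :: T) -> reduced_syllables T.
Proof.
case=> [|[altT properT]]; first by case: T => // _; left.
right; split; first exact: path_sorted altT.
by move=> s sT; apply: properT; rewrite inE sT orbT.
Qed.

Lemma syllable_pair_merge s t :
  [\/ left_syllable s = left_syllable t, ~ proper_syllable s | ~ proper_syllable t] ->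
  exists u, syllable_word s ++ syllable_word t ~ syllable_word u.
Proof.
have merge s' t' : left_syllable s' = left_syllable t' ->
    exists u, syllable_word s' ++ syllable_word t' ~ syllable_word u.
  by move/syllable_merge => [u <-]; exists u; apply: pres_refl.
have [/merge //|Dst] := eqVneq (left_syllable s) (left_syllable t).
case=> [/eqP|/syllable_transfer[s' Ds' Hs']|/syllable_transfer[t' Dt' Ht']].
- by rewrite (negPf Dst).
- have [|u Hu] := merge s' t; first by move: Ds' Dst; do 3!case: left_syllable.
  by exists u; apply: pres_trans (pres_congr _ Hs') Hu.
- have [|u Hu] := merge s t'; first by move: Dt' Dst; do 3!case: left_syllable.
  by exists u; apply: pres_trans (pres_congl _ Ht') Hu.
Qed.

Lemma reduced_syllables_cons s T : reduced_syllables T ->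
  exists2 S, syllable_word s ++ syllables_word T ~ syllables_word S & reduced_syllables S.
Proof.
elim: T s => [|t T IH] s rT; first by exists [:: s]; [apply: pres_refl|left].
have [rS|[u Hu]] : reduced_syllables [:: s, t & T] \/
    exists u, syllable_word s ++ syllable_word t ~ syllable_word u.
- have [Est|Dst] := eqVneq (left_syllable s) (left_syllable t).
    by right; apply/syllable_pair_merge/Or31.
  have [properS|] := classic (proper_syllable s); last by right; apply/syllable_pair_merge/Or32.
  have properS_T : {in t :: T, forall x, proper_syllable x} ->
      {in [:: s, t & T], forall x, proper_syllable x}.
    by move=> properT x; rewrite inE => /predU1P[->|/properT].
  case: rT => [|[altT properT]].
    case: T {IH} properS_T => // properS_T _.
    have [properT|] := classic (proper_syllable t); last by right; apply/syllable_pair_merge/Or33.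
    by left; right; rewrite /alternating /= Dst; split=> //; apply: properS_T => x /[!inE] /eqP->.
  by left; right; rewrite /alternating /= Dst; split=> //; apply: properS_T.
- by exists [:: s, t & T]; first apply: pres_refl.
- have [S HS rS] := IH u (reduced_syllables_tail rT).
  by exists S => //; rewrite syllables_word_cons catA; apply: pres_trans (pres_congr _ Hu) HS.
Qed.

Lemma amal_normal_form W : exists2 S, W ~ syllables_word S & reduced_syllables S.
Proof.
rewrite -(syllables_word_letters W); elim: (map letter_syllable W) => [|s S [S' HS rS']].
  by exists [::]; [apply: pres_refl|left].
have [S'' HS'' rS''] := reduced_syllables_cons s rS'.
by exists S'' => //; rewrite syllables_word_cons; apply: pres_trans (pres_congl _ HS) HS''.
Qed.

Variables (alpha : 'I_n -> perm) (alpha' : 'I_m -> perm).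
Local Notation fa := (act_of alpha).
Local Notation fa' := (act_of alpha').
Local Notation gam := (gamma_f alpha alpha').
Local Notation Z := (Zset alpha alpha' c d).

Lemma weval_mapL t w x : weval (gam t) (mapL w) x = weval fa w x.
Proof. by elim: w => [|[a b] w IH] //=; rewrite IH. Qed.

Lemma weval_mapR t w x : weval (gam t) (mapR w) x = pinv t (weval fa' w (pfun t x)).
Proof. by elim: w => [|[a []] w IH] /=; rewrite ?pK // IH pKV. Qed.

Lemma pres_weval t W W' : Z t -> W ~ W' -> weval (gam t) W =1 weval (gam t) W'.
Proof.
move=> Zt; elim=> {W W'} [W W' step|W|W W' _ IH|W1 W2 W3 _ IH1 _ IH2] x //.
- case: step => [u v [a b]|u v]; rewrite !weval_cat; first by case: b => /=; rewrite ?pK ?pKV.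
  congr (weval _ u _); set y := weval _ v x.
  rewrite -[in RHS](weval_winvKV (gam t) (mapR d) y).
  by rewrite weval_mapL weval_mapR -Zt pK.
- by rewrite IH1 IH2.
Qed.

Lemma conj_agree (s t : perm) (h : int -> int) y :
  agree s t [:: y; pinv s (h (pfun s y))] -> pinv t (h (pfun t y)) = pinv s (h (pfun s y)).
Proof.
move=> st; set q := pinv s _.
have -> : pfun t y = pfun s y by rewrite st ?mem_head.
have tq : pfun t q = pfun s q by rewrite st // !inE eqxx orbT.
by rewrite -[h _](pKV s) -/q -tq pK.
Qed.

Lemma weval_gamma_agree s t W x :
  agree s t (trajectory (gam s) W x) -> weval (gam t) W x = weval (gam s) W x.
Proof.
elim: W => [//|l W IH] st; rewrite !weval_cons IH => [|z zW]; last by rewrite st // inE zW orbT.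
have yW := trajectory_head (gam s) W x; set y := weval (gam s) W x in yW *.
have lW := trajectory_head (gam s) (l :: W) x.
case: l st lW => [[a|a] b] // st lW.
have yt : y \in trajectory (gam s) ((inr a, b) :: W) x by rewrite inE yW orbT.
case: b st lW yt => st lW yt /=.
- apply: (conj_agree (h := pinv (act_of alpha' a))) => z /[!inE] /orP[]/eqP->; exact: st.
- apply: (conj_agree (h := pfun (act_of alpha' a))) => z /[!inE] /orP[]/eqP->; exact: st.
Qed.

Definition kernel_witness (W : word) (t : perm) : Prop :=
  [/\ Z t, ~ W ~ [::] & forall x, weval (gam t) W x = x].

Lemma kernel_witness_closed W : rel_closed Z (kernel_witness W).
Proof.
split=> [t []//|s Zs notK].
have [trivW|nontrivW] := classic (W ~ [::]); first by exists [::] => t _ _ [].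
have [x Wx] : exists x, weval (gam s) W x <> x.
  by apply: NNPP => fixW; apply: notK; split => // x; apply: NNPP => Wx; apply: fixW; exists x.
by exists (trajectory (gam s) W x) => t _ /weval_gamma_agree Est [_ _ /(_ x)]; rewrite Est.
Qed.

Definition c_fixed x := weval fa c x = x.

Section Perturbation.
Variable sg : perm.
Hypotheses (Zsg : Z sg) (ga : good_action fa c) (ga' : good_action fa' d).

Definition syllable_act (s : syllable) (x : int) : int :=
  match s with inl w => weval fa w x | inr w => pinv sg (weval fa' w (pfun sg x)) end.

Lemma weval_syllable s x : weval (gam sg) (syllable_word s) x = syllable_act s x.
Proof. by case: s => w; rewrite /= ?weval_mapL ?weval_mapR. Qed.

Lemma c_fixed_conj z : weval fa' d z = z -> c_fixed (pinv sg z).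
Proof. by move=> dz; apply: (can_inj (pK sg)); rewrite Zsg !pKV dz. Qed.

Lemma syllable_act_nontrivial s : ~ syllable_word s ~ [::] -> exists x, syllable_act s x <> x.
Proof.
move=> nontriv; apply: NNPP => fix_s; apply: nontriv.
case: s fix_s => w /= fix_w.
- rewrite [X in _ ~ X](_ : [::] = mapL (reduce w)); first exact: pres_wmap_reduce.
  rewrite (good_action_faithful ga) // => x.
  by apply: NNPP => wx; apply: fix_w; exists x.
- rewrite [X in _ ~ X](_ : [::] = mapR (reduce w)); first exact: pres_wmap_reduce.
  rewrite (good_action_faithful ga') // => z.
  apply: NNPP => wz; apply: fix_w; exists (pinv sg z).
  by rewrite pKV => /(congr1 (pfun sg)); rewrite !pKV.
Qed.

Lemma proper_syllable_move s : proper_syllable s -> pingpong_move syllable_act c_fixed s.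
Proof.
case: s => w /= proper_w U.
- have notc k : reduce w <> reduce (zpow c k) by move=> E; apply: proper_w; exists k.
  have [x [xL [cx cwx /eqP wx]]] :=
    good_action_fixed_points ga notc (U ++ map (weval fa (winv w)) U).
  move: xL; rewrite mem_cat negb_or => /andP[xU xU'].
  by exists x; split => //; apply: notin_map_cancel (weval_winvK fa w) xU'.
- have notd k : reduce w <> reduce (zpow d k) by move=> E; apply: proper_w; exists k.
  have [z [zL [dz dwz wz]]] := good_action_fixed_points ga' notd
    (map (pfun sg) U ++ map (weval fa' (winv w) \o pfun sg) U).
  move: zL; rewrite mem_cat negb_or => /andP[zU zU'].
  have wK : cancel (pinv sg \o weval fa' w) (weval fa' (winv w) \o pfun sg).
    by move=> y /=; rewrite pKV weval_winvK.
  exists (pinv sg z); rewrite /= pKV; split; try exact: c_fixed_conj.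
  + exact: notin_map_cancel (pKV sg) zU.
  + exact: notin_map_cancel wK zU'.
  + by apply/eqP => /(can_inj (pKV sg)).
Qed.

Section Swap.
Variables (P : seq (int * int)) (uP : uniq (pairs_support P)).

Definition perturbed : perm := Defs.pcomp sg (swap_perm uP).

Lemma perturbed_Zset : {in pairs_support P, forall z, c_fixed z} -> Z perturbed.
Proof.
move=> cP x /=; have [xP|xP] := boolP (x \in pairs_support P).
  by rewrite cP // -Zsg cP // swap_pairs_in.
have cxP : weval fa c x \notin pairs_support P.
  by apply: contra xP => cxP; rewrite -(weval_inj (cP _ cxP)).
by rewrite !swap_pairs_out.
Qed.

Lemma perturbed_agree L : {in pairs_support P, forall z, z \notin L} -> agree sg perturbed L.
Proof. by move=> PL x xL /=; rewrite swap_pairs_out // (contraTN (PL x) xL). Qed.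

Lemma weval_perturbed_syllable s x :
  weval (gam perturbed) (syllable_word s) x =
  if s is inl _ then syllable_act s x else swap_pairs P (syllable_act s (swap_pairs P x)).
Proof. by case: s => w; rewrite /= ?weval_mapL ?weval_mapR. Qed.

Lemma weval_perturbed_alternating s S z : swap_pairs P z = z -> alternating (s :: S) ->
  weval (gam perturbed) (syllables_word (s :: S)) z =
  (if s is inl _ then id else swap_pairs P) (chain syllable_act (swap_pairs P) (s :: S) z).
Proof.
move=> zP; elim: S s => [|s' S IH] s.
  by rewrite /syllables_word /= cats0 weval_perturbed_syllable; case: s => w; rewrite ?zP.
rewrite /alternating /= => /andP[ss' altS].
rewrite syllables_word_cons weval_cat IH // weval_perturbed_syllable.
by case: s s' ss' {IH altS} => w [] w'.
Qed.

End Swap.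

Lemma kernel_witness_perturbation W : ~ W ~ [::] -> forall L : seq int,
  exists t, [/\ Z t, agree sg t L & exists x, weval (gam t) W x <> x].
Proof.
move=> nontrivW L; have [S HW rS] := amal_normal_form W.
have act_W t : Z t -> weval (gam t) W =1 weval (gam t) (syllables_word S).
  by move=> Zt; apply: pres_weval.
case: S HW rS act_W => [/nontrivW//|s S HW [sizeS|[altS properS]] act_W].
  case: S sizeS HW act_W => // _; rewrite /syllables_word /= cats0 => HW act_W.
  have [|x sx] := @syllable_act_nontrivial s; first by move=> triv; apply/nontrivW/(pres_trans HW).
  by exists sg; split=> //; exists x; rewrite act_W // weval_syllable.
have [x [y [P [uxP yxP [_ yL] cP chainP]]]] :=
  @pingpong _ _ _ (s :: S) isT (fun s' s'S => proper_syllable_move (properS s' s'S)) L.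
have uP : uniq (pairs_support P) by case/andP: uxP.
move: uxP yxP; rewrite /= inE negb_or => /andP[xP _] /andP[yx yP].
have Zt := perturbed_Zset uP (fun z zP => (cP z zP).1).
exists (perturbed uP); split=> //; first by apply: perturbed_agree => z /cP[].
exists x; rewrite act_W // (weval_perturbed_alternating uP (swap_pairs_out xP) altS).
rewrite (chainP _ (fun a b => swap_pairs_mem uP)).
by case: s {properS altS HW act_W chainP} => w /=; rewrite ?swap_pairs_out //; apply/eqP.
Qed.

End Perturbation.

Lemma kernel_witness_empty_interior W :
  good_action fa c -> good_action fa' d -> rel_empty_interior Z (kernel_witness W).
Proof.
move=> ga ga' s [Zs nontrivW _] L.
have [t [Zt st [x Wx]]] := kernel_witness_perturbation Zs ga ga' nontrivW L.
by exists t; split=> // [[_ _ /(_ x)]].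
Qed.

End Amalgam.

Lemma generic_in_countable (I : countType) (Z S : perm -> Prop) (B : I -> perm -> Prop) :
  (forall s, S s -> Z s) ->
  (forall i, rel_closed Z (B i) /\ rel_empty_interior Z (B i)) ->
  (forall s, Z s /\ ~ S s <-> exists i, B i s) ->
  generic_in Z S.
Proof.
move=> SZ B_nowhere_dense notS; split=> //.
exists (fun k s => if @unpickle I k is Some i then B i s else False); split.
  move=> k; case: (unpickle k) => [i|]; first exact: B_nowhere_dense.
  by split; [split=> [//|s _ _]; exists [::] => ? _ _ []|move=> s []].
move=> s; rewrite notS; split=> [[i Bi]|[k]]; first by exists (pickle i); rewrite pickleK.
by case: (unpickle k) => // i Bi; exists i.
Qed.

Theorem proposition12 (n m : nat) (alpha : 'I_n -> perm) (alpha' : 'I_m -> perm)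
  (c : seq (option 'I_n * bool)) (d : seq (option 'I_m * bool)) :
  (0 < n)%N -> (0 < m)%N ->
  c <> [::] -> cyc_reduced c -> expsum None c = 0 ->
  d <> [::] -> cyc_reduced d -> expsum None d = 0 ->
  good_action (act_of alpha) c -> good_action (act_of alpha') d ->
  generic_in (Zset alpha alpha' c d) (O1 alpha alpha' c d).
Proof.
move=> _ _ _ _ _ _ _ _ ga ga'.
apply: (generic_in_countable (B := kernel_witness c d alpha alpha')) => [s []//|W|s].
  by split; [apply: kernel_witness_closed|apply: kernel_witness_empty_interior].
split=> [[Zs notO1]|[W [Zs nontrivW trivW]]]; last by split=> // -[_ /(_ W trivW)].
apply: NNPP => noW; apply: notO1; split=> // W trivW.
by apply: NNPP => nontrivW; apply: noW; exists W.
Qed.
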